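(* Let $G$ be a simple graph and let $C=v-u-u_1-u_2-\dots-u_\ell-u'-v$ be a cycle of length at least $6$ in $G$ such that $u-u_1-\dots-u_\ell-u'$ is an induced path of $G$. Then $G$ has an induced cycle of length at least $4$, or $G$ has an induced claw $J$ and a triangle $T$ with $V(J)\cap V(T)\neq\emptyset$.
   Context: A claw is the graph $K_{1,3}$. *)

From mathcomp Require Import all_boot.
Set Implicit Arguments. Unset Strict Implicit. Unset Printing Implicit Defensive.

Definition simple_graph (T : finType) (e : rel T) : Prop :=
  symmetric e /\ irreflexive e.

Definition induced_cycle (T : finType) (e : rel T) (c : seq T) : Prop :=
  [/\ uniq c, 3 <= size c, cycle e c &
      forall x y, x \in c -> y \in c -> e x y -> (y == next c x) || (x == next c y)].

Definition induced_claw (T : finType) (e : rel T) (a b1 b2 b3 : T) : Prop :=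
  [/\ uniq [:: a; b1; b2; b3], e a b1 && e a b2 && e a b3 &
      ~~ e b1 b2 && ~~ e b1 b3 && ~~ e b2 b3].

Definition triangle (T : finType) (e : rel T) (x y z : T) : Prop :=
  uniq [:: x; y; z] /\ [&& e x y, e y z & e x z].

From mathcomp Require Import all_boot zify.
Set Implicit Arguments. Unset Strict Implicit. Unset Printing Implicit Defensive.

(* If v is adjacent to every vertex of the induced path P = u u_1 ... u', then
   v is the centre of the claw v; u, u_2, u_4 and lies on the triangle v u u_1.
   Otherwise some vertex of P is not adjacent to v; if u_i and u_j are the
   nearest neighbours of v on P before and after it, then v u_i ... u_j is an
   induced cycle, of length at least 4. *)

Definition induced_path (T : finType) (e : rel T) (x0 : T) (q : seq T) : Prop :=
  forall a b, a < size q -> b < size q ->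
    e (nth x0 q a) (nth x0 q b) = (a == b.+1) || (b == a.+1).

Lemma enclosing_gap (P : pred nat) n k :
  P 0 -> P n -> k <= n -> ~~ P k ->
  exists i j, [/\ i < k < j, j <= n, P i, P j & forall a, i < a < j -> ~~ P a].
Proof.
move=> P0 Pn kn nPk.
have k_gt0 : 0 < k by case: k nPk {kn} => //; rewrite P0.
have k_ltn : k < n by rewrite ltn_neqAle kn andbT; apply: contraNneq nPk => ->.
have before : exists i, (i < k) && P i by exists 0; rewrite k_gt0 P0.
have after : exists j, [&& k < j, j <= n & P j] by exists n; rewrite k_ltn leqnn Pn.
have below_k i : (i < k) && P i -> i <= k by case/andP=> /ltnW.
have [i /andP[ik Pi] i_max] := ex_maxnP before below_k.
have [j /and3P[kj jn Pj] j_min] := ex_minnP after.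
exists i, j; split; rewrite ?ik ?kj //.
move=> a /andP[ia aj]; apply/negP => Pa.
case: (ltngtP a k) => [ak | ka | ak]; last by rewrite -ak Pa in nPk.
- by have := i_max a; rewrite ak Pa => /(_ isT); rewrite leqNgt ia.
- by have := j_min a; rewrite ka Pa (leq_trans (ltnW aj) jn) => /(_ isT); rewrite leqNgt aj.
Qed.

Lemma uniq_map_nth (T : eqType) (x0 : T) (s : seq T) (ids : seq nat) :
  uniq s -> uniq ids -> all (gtn (size s)) ids -> uniq (map (nth x0 s) ids).
Proof.
move=> s_uniq ids_uniq /allP ids_lt; rewrite map_inj_in_uniq // => a b a_in b_in.
by move/eqP; rewrite nth_uniq ?[_ < _]ids_lt // => /eqP.
Qed.

Lemma next_cons_nth (T : eqType) (v : T) (q : seq T) a :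
  uniq (v :: q) -> a <= size q -> next (v :: q) (nth v (v :: q) a) = nth v q a.
Proof. by move=> vq_uniq a_le; rewrite next_nth mem_nth // index_uniq. Qed.

Lemma induced_path_take_drop (T : finType) (e : rel T) x0 q i n :
  induced_path e x0 q -> induced_path e x0 (take n (drop i q)).
Proof.
move=> q_ind a b; rewrite size_take size_drop.
case: (ltnP n (size q - i)) => n_size a_lt b_lt.
all: rewrite !nth_take ?nth_drop ?q_ind -?addnS ?eqn_add2l //; lia.
Qed.

Section SimpleGraph.

Variables (T : finType) (e : rel T).
Hypotheses (e_sym : symmetric e) (e_irr : irreflexive e).

Lemma cycle_cons_ends (v : T) (p : seq T) :
  0 < size p -> cycle e (v :: p) -> e v (nth v p 0) && e v (nth v p (size p).-1).
Proof.
move=> p_size; rewrite /cycle rcons_path => /andP[vp_path last_v].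
rewrite nth_last [e v _ in X in _ && X]e_sym last_v andbT.
by case: p p_size vp_path {last_v} => // x s _ /andP[].
Qed.

Lemma induced_cycle_cons (v : T) (q : seq T) :
  uniq (v :: q) -> 1 < size q -> induced_path e v q ->
  (forall a, a < size q -> e v (nth v q a) = (a == 0) || (a == (size q).-1)) ->
  induced_cycle e (v :: q).
Proof.
move=> vq_uniq q_size q_ind v_adj.
have v_q0 : e v (nth v q 0) by rewrite v_adj ?eqxx //; lia.
have v_qlast : e v (nth v q (size q).-1) by rewrite v_adj ?eqxx ?orbT //; lia.
split=> //.
- rewrite /cycle rcons_path -nth_last e_sym v_qlast andbT.
  apply/(pathP v) => -[|a] a_lt //=.
  by rewrite q_ind ?eqxx ?orbT //; lia.
move=> x y /(nthP v) [a a_lt <-] /(nthP v) [b b_lt <-].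
rewrite !next_cons_nth //.
(* [next] wraps the last vertex of [q] around to [v], the default of [nth v q]. *)
case: a a_lt => [|a] a_lt; case: b b_lt => [|b] b_lt /=.
- by rewrite e_irr.
- rewrite v_adj // => /orP[/eqP -> | /eqP ->]; first by rewrite eqxx.
  by rewrite prednK ?(nth_default _ (leqnn _)) ?eqxx ?orbT //; lia.
- move=> x_y; rewrite e_sym v_adj // in x_y.
  case/orP: x_y => [/eqP -> | /eqP ->]; first by rewrite eqxx orbT.
  by rewrite prednK ?(nth_default _ (leqnn _)) ?eqxx //; lia.
- by rewrite q_ind // => /orP[/eqP -> | /eqP ->]; rewrite eqxx ?orbT.
Qed.

Lemma induced_cycle_window (v : T) (p : seq T) i j :
  uniq (v :: p) -> induced_path e v p -> i < j < size p ->
  e v (nth v p i) -> e v (nth v p j) -> (forall a, i < a < j -> ~~ e v (nth v p a)) ->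
  induced_cycle e (v :: take (j - i).+1 (drop i p)).
Proof.
move=> vp_uniq p_ind /andP[ij j_lt] v_pi v_pj v_gap.
set q := take (j - i).+1 (drop i p).
have size_q : size q = (j - i).+1.
  by rewrite size_takel // size_drop ltn_subRL subnKC // ltnW.
have nth_q a : a <= j - i -> nth v q a = nth v p (i + a).
  by move=> a_le; rewrite nth_take // nth_drop.
apply: induced_cycle_cons.
- move: vp_uniq; rewrite !cons_uniq => /andP[v_notin p_uniq].
  rewrite take_uniq ?drop_uniq // andbT.
  by apply: contra v_notin => /mem_take /mem_drop.
- by rewrite size_q ltnS subn_gt0.
- exact: induced_path_take_drop.
move=> a; rewrite size_q ltnS /= => a_le; rewrite nth_q //.
have [-> | a_pos] := posnP a; first by rewrite addn0 v_pi.
have [-> | a_ne] := eqVneq a (j - i); first by rewrite subnKC ?v_pj ?eqxx ?orbT // ltnW.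
have a_lt : a < j - i by rewrite ltn_neqAle a_ne.
rewrite (negbTE (v_gap _ _)) //.
by rewrite -ltn_subRL a_lt -{1}(addn0 i) ltn_add2l a_pos.
Qed.

Section Hub.

Variables (v : T) (p : seq T).
Hypotheses (vp_uniq : uniq (v :: p)) (p_ind : induced_path e v p) (v_all : all (e v) p).

Lemma hub_claw : 4 < size p -> induced_claw e v (nth v p 0) (nth v p 2) (nth v p 4).
Proof.
move=> p_size; have p_lt a : a <= 4 -> a < size p by move/leq_ltn_trans; apply.
split.
- by apply: (uniq_map_nth v (ids := [:: 0; 1; 3; 5]) vp_uniq); rewrite //= !ltnS !p_lt.
- by rewrite !(allP v_all) ?mem_nth ?p_lt.
- by rewrite !p_ind ?p_lt.
Qed.

Lemma hub_triangle : 1 < size p -> triangle e v (nth v p 0) (nth v p 1).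
Proof.
move=> p_size; have p_lt a : a <= 1 -> a < size p by move/leq_ltn_trans; apply.
split.
- by apply: (uniq_map_nth v (ids := [:: 0; 1; 2]) vp_uniq); rewrite //= !ltnS !p_lt.
- by rewrite !(allP v_all) ?p_ind ?mem_nth ?p_lt.
Qed.

End Hub.

End SimpleGraph.

Theorem mainTheorem14 (T : finType) (e : rel T) (v : T) (p : seq T) :
  simple_graph e ->
  6 <= (size p).+1 ->
  uniq (v :: p) ->
  cycle e (v :: p) ->
  (forall i j, i < size p -> j < size p ->
     e (nth v p i) (nth v p j) = (i == j.+1) || (j == i.+1)) ->
  (exists c : seq T, induced_cycle e c /\ 4 <= size c) \/
  (exists a b1 b2 b3 x y z : T,
     [/\ induced_claw e a b1 b2 b3, triangle e x y z &
         has (fun w => w \in [:: x; y; z]) [:: a; b1; b2; b3]]).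
Proof.
move=> [e_sym e_irr]; rewrite ltnS => p_size vp_uniq vp_cycle p_ind.
have p_pos : 0 < size p by apply: leq_trans p_size.
have /andP[v_first v_last] := cycle_cons_ends e_sym p_pos vp_cycle.
have [v_all |] := boolP (all (e v) p).
  right; exists v, (nth v p 0), (nth v p 2), (nth v p 4), v, (nth v p 0), (nth v p 1).
  split; [exact: hub_claw | | by rewrite /= inE eqxx].
  by apply: hub_triangle => //; apply: leq_trans p_size.
rewrite -has_predC => /(has_nthP v) [k k_lt v_nk].
have k_le : k <= (size p).-1 by rewrite -ltnS prednK.
have [i [j [/andP[ik kj] j_le v_pi v_pj v_gap]]] :=
  enclosing_gap (P := fun a => e v (nth v p a)) v_first v_last k_le v_nk.
left; exists (v :: take (j - i).+1 (drop i p)); split.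
  by apply: induced_cycle_window => //; rewrite (ltn_trans ik kj); lia.
by rewrite /= size_takel ?size_drop; lia.
Qed.
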